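(* For every integer $T=3k+2$ with $k\ge 1$ and every $\sigma\in\mathfrak S_3$, the vector $\sigma c$ with $c=[2k+1,\,-k,\,-k,\,-k,\,2k+1,\,2k+1]$ defines a facet of $P^T$.
   Context: For an integer $T\ge 2$, let $\Omega_T$ be the set of words $w=s_1s_2\cdots s_T$ over $\{1,2,3\}$ with $s_l\neq s_{l+1}$ for $l=1,\dots,T-1$. For $w\in\Omega_T$ and an ordered pair $ij$, $i\neq j$, let $x_{ij}(w)$ be the number of indices $1\le l\le T-1$ with $s_ls_{l+1}=ij$. Vectors of $\mathbb R^6$ are indexed in the order $[x_{12},x_{13},x_{21},x_{23},x_{31},x_{32}]$. Let $a_w=[x_{12}(w),\dots,x_{32}(w)]$ and $P^T=\mathrm{conv}\{a_w:w\in\Omega_T\}$. $\mathfrak S_3$ acts on $\mathbb R^6$ by $(\sigma c)_{ij}=c_{\sigma(i)\sigma(j)}$. A vector $c$ defines a facet of $P^T$ if $c\cdot a_w\ge0$ for all $w\in\Omega_T$ and $\{x\in P^T: c\cdot x=0\}$ is a facet of $P^T$. *)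

From HB Require Import structures.
From mathcomp Require Import all_boot all_order all_algebra all_fingroup.
Set Implicit Arguments. Unset Strict Implicit. Unset Printing Implicit Defensive.
Import Order.TTheory GRing.Theory Num.Theory.
Local Open Scope ring_scope.

(* Letters 1,2,3 are represented by the ordinals 0,1,2 of 'I_3. *)

Definition Omega (T : nat) : {set T.-tuple 'I_3} :=
  [set w : T.-tuple 'I_3 |
     [forall l : 'I_T, (l.+1 < T)%N ==> (tnth w l != nth ord0 w l.+1)]].

(* x_ij(w) = #{ 1 <= l <= T-1 : s_l s_{l+1} = ij } (0-based here) *)
Definition xcount (T : nat) (w : T.-tuple 'I_3) (i j : 'I_3) : nat :=
  #|[set l : 'I_T | [&& (l.+1 < T)%N, tnth w l == i & nth ord0 w l.+1 == j]]|.

(* Coordinate order [x12, x13, x21, x23, x31, x32] *)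
Definition pair_of (k : 'I_6) : 'I_3 * 'I_3 :=
  nth (ord0, ord0)
    [:: (inord 0, inord 1); (inord 0, inord 2); (inord 1, inord 0);
        (inord 1, inord 2); (inord 2, inord 0); (inord 2, inord 1)] k.

(* inverse on off-diagonal pairs (diagonal pairs are never used) *)
Definition idx_of (i j : 'I_3) : 'I_6 :=
  inord (2 * i + (if (j < i)%N then (j : nat) else (j : nat).-1))%N.

Definition avec (R : pzRingType) (T : nat) (w : T.-tuple 'I_3) : 'rV[R]_6 :=
  \row_(k < 6) (xcount w (pair_of k).1 (pair_of k).2)%:R.

Definition sact (R : pzRingType) (s : 'S_3) (c : 'rV[R]_6) : 'rV[R]_6 :=
  \row_(k < 6) c 0 (idx_of (s (pair_of k).1) (s (pair_of k).2)).

Definition dotv (R : pzRingType) (c x : 'rV[R]_6) : R := \sum_(k < 6) c 0 k * x 0 k.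

Definition PT (R : realFieldType) (T : nat) : 'rV[R]_6 -> Prop :=
  fun x => exists lam : T.-tuple 'I_3 -> R,
    (forall w, 0 <= lam w) /\
    \sum_(w in Omega T) lam w = 1 /\
    x = \sum_(w in Omega T) lam w *: @avec R _ w.

Definition has_aff_indep (R : realFieldType) (S : 'rV[R]_6 -> Prop) (d : nat) : Prop :=
  exists p : 'I_d.+1 -> 'rV[R]_6,
    (forall i, S (p i)) /\
    row_free (\matrix_(i < d) (p (lift ord0 i) - p ord0)).

(* affine dimension of a set S (as an integer; -1 for the empty set) *)
Definition is_affdim (R : realFieldType) (S : 'rV[R]_6 -> Prop) (d : int) : Prop :=
  match d with
  | Posz n => has_aff_indep S n /\ ~ has_aff_indep S n.+1
  | Negz 0 => forall x, ~ S x
  | Negz _ => False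
  end.

Definition defines_facet (R : realFieldType) (T : nat) (c : 'rV[R]_6) : Prop :=
  (forall w, w \in Omega T -> 0 <= dotv c (@avec R _ w)) /\
  exists d : int,
    @is_affdim R (@PT R T) d /\
    @is_affdim R (fun x => @PT R T x /\ dotv c x = 0) (d - 1).

Definition cvec (R : pzRingType) (k : nat) : 'rV[R]_6 :=
  \row_(i < 6) nth 0
    [:: (2 * k + 1)%:R; - k%:R; - k%:R; - k%:R; (2 * k + 1)%:R; (2 * k + 1)%:R] i.

(* A word of length 3k+2 has 3k+1 transitions, each weighing 2k+1 or -k in c.  The light
   transitions form an acyclic graph without paths of length 3, so each of the first k
   blocks of three consecutive transitions weighs at least 1 and the last transition at
   least -k: c.a_w >= 0.  For the dimensions, the words (213)^(k-1) extended by five letters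
   at either end give six affinely independent points of P^T, which lies in the hyperplane
   sum x = T - 1, and five of them lie on c.x = 0; as c is not parallel to the all-ones
   vector, the face has dimension exactly 4.  Everything is equivariant under S_3, which
   permutes the coordinates and maps words to words, so it suffices to treat c itself. *)

From HB Require Import structures.
From mathcomp Require Import all_boot all_order all_algebra all_fingroup.
From mathcomp Require Import lra ring zify.
Import Order.TTheory GRing.Theory Num.Theory.
Set Implicit Arguments. Unset Strict Implicit. Unset Printing Implicit Defensive.
Local Open Scope ring_scope.

Definition ord3 (n : nat) : 'I_3 :=
  match n with 0 => @Ordinal 3 0 isT | 1 => @Ordinal 3 1 isT | _ => @Ordinal 3 2 isT end.

Definition ord6 (n : nat) : 'I_6 :=
  match n with
  | 0 => @Ordinal 6 0 isT | 1 => @Ordinal 6 1 isT | 2 => @Ordinal 6 2 isT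
  | 3 => @Ordinal 6 3 isT | 4 => @Ordinal 6 4 isT | _ => @Ordinal 6 5 isT
  end.

Lemma pair_ofE q : pair_of q =
  nth (ord0, ord0) [:: (ord3 0, ord3 1); (ord3 0, ord3 2); (ord3 1, ord3 0);
                      (ord3 1, ord3 2); (ord3 2, ord3 0); (ord3 2, ord3 1)] q.
Proof.
have inord3 n : (n < 3)%N -> inord n = ord3 n.
  by move=> ltn3; apply: val_inj; rewrite /= inordK //; case: n ltn3 => [|[|[|]]].
by rewrite /pair_of !inord3.
Qed.

Lemma idx_ofE a b :
  idx_of a b = ord6 (2 * a + (if (b < a)%N then (b : nat) else (b : nat).-1)).
Proof.
rewrite /idx_of; apply: val_inj; rewrite /= inordK.
  by case: a b => [[|[|[|//]]] ?] [[|[|[|//]]] ?].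
by case: a b => [[|[|[|//]]] ?] [[|[|[|//]]] ?].
Qed.

Lemma pair_of_neq q : (pair_of q).1 != (pair_of q).2.
Proof. by rewrite pair_ofE; case: q => [[|[|[|[|[|[|//]]]]]] ?]. Qed.

Lemma eq_pair_of a b q : a != b -> ((a, b) == pair_of q) = (q == idx_of a b).
Proof.
rewrite pair_ofE idx_ofE.
by case: a b q => [[|[|[|//]]] ?] [[|[|[|//]]] ?] [[|[|[|[|[|[|//]]]]]] ?].
Qed.

Lemma pair_of_idx a b : a != b -> pair_of (idx_of a b) = (a, b).
Proof. by move=> neq_ab; apply/esym/eqP; rewrite eq_pair_of. Qed.

Lemma idx_of_pair q : idx_of (pair_of q).1 (pair_of q).2 = q.
Proof. by apply/esym/eqP; rewrite -eq_pair_of ?pair_of_neq // -surjective_pairing. Qed.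

Section Coordinates.
Variable R : comPzRingType.
Implicit Types c x y : 'rV[R]_6.

Definition tvec (a b : 'I_3) : 'rV[R]_6 := \row_q ((a, b) == pair_of q)%:R.

Lemma avec_trans T (w : T.-tuple 'I_3) :
  avec R w = \sum_(l < T.-1) tvec (nth ord0 w l) (nth ord0 w l.+1).
Proof.
apply/rowP => q; rewrite !mxE summxE /xcount -sum1_card big_mkcond natr_sum /=.
case: T w => [|T] w /=; first by rewrite !big_ord0.
rewrite big_ord_recr /= inE ltnn /= addr0; apply: eq_bigr => l _.
rewrite inE /= ltnS ltn_ord (tnth_nth ord0) mxE [pair_of q]surjective_pairing.
by rewrite xpair_eqE /=; case: (_ && _).
Qed.

Lemma dotvD c x y : dotv c (x + y) = dotv c x + dotv c y.
Proof. by rewrite /dotv -big_split; apply: eq_bigr => q _; rewrite mxE mulrDr. Qed.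

Lemma dotvN c x : dotv c (- x) = - dotv c x.
Proof. by rewrite /dotv -sumrN; apply: eq_bigr => q _; rewrite mxE mulrN. Qed.

Lemma dotvB c x y : dotv c (x - y) = dotv c x - dotv c y.
Proof. by rewrite dotvD dotvN. Qed.

Lemma dotvZ c (a : R) x : dotv c (a *: x) = a * dotv c x.
Proof. by rewrite /dotv mulr_sumr; apply: eq_bigr => q _; rewrite mxE mulrCA. Qed.

Lemma dotv_sum c I r (P : pred I) (F : I -> 'rV[R]_6) :
  dotv c (\sum_(i <- r | P i) F i) = \sum_(i <- r | P i) dotv c (F i).
Proof.
by apply: (big_morph (dotv c) (dotvD c)); rewrite /dotv big1 // => q _; rewrite mxE mulr0.
Qed.

Lemma dotv_trans c a b : a != b -> dotv c (tvec a b) = c 0 (idx_of a b).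
Proof.
move=> neq_ab; rewrite /dotv (bigD1 (idx_of a b)) //= mxE eq_pair_of // eqxx mulr1.
by rewrite big1 ?addr0 // => q /negbTE nq; rewrite mxE eq_pair_of // nq mulr0.
Qed.

End Coordinates.

Lemma eq_invperm (s : 'S_3) a b : ((s^-1)%g a == b) = (a == s b).
Proof. by rewrite -(inj_eq (@perm_inj _ s)) permKV. Qed.

Definition sidx (s : 'S_3) (q : 'I_6) : 'I_6 :=
  idx_of (s (pair_of q).1) (s (pair_of q).2).

Lemma pair_of_sidx s q : pair_of (sidx s q) = (s (pair_of q).1, s (pair_of q).2).
Proof. by rewrite pair_of_idx // (inj_eq perm_inj) pair_of_neq. Qed.

Lemma sidx_inj s : injective (sidx s).
Proof.
move=> q1 q2 /(congr1 pair_of); rewrite !pair_of_sidx => -[/perm_inj e1 /perm_inj e2].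
by rewrite -(idx_of_pair q1) -(idx_of_pair q2) e1 e2.
Qed.

Section Symmetry.
Variable R : comPzRingType.
Implicit Types (s : 'S_3) (c x : 'rV[R]_6).

Lemma sactE s x : sact s x = x *m perm_mx (perm (@sidx_inj s))^-1.
Proof. by rewrite -col_permE; apply/rowP => q; rewrite !mxE permE. Qed.

Lemma sact_trans s a b : sact s (tvec R a b) = tvec R ((s^-1)%g a) ((s^-1)%g b).
Proof.
apply/rowP => q; rewrite !mxE pair_of_sidx [pair_of q]surjective_pairing.
by rewrite !xpair_eqE !eq_invperm.
Qed.

Lemma dotv_sact s c x : dotv (sact s c) (sact s x) = dotv c x.
Proof.
rewrite /dotv [RHS](reindex_inj (@sidx_inj s)).
by apply: eq_bigr => q _; rewrite !mxE.
Qed.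

Lemma sactKV s : cancel (@sact R (s^-1)%g) (@sact R s).
Proof.
move=> x; apply/rowP => q; rewrite !mxE pair_of_sidx /= !permK.
by rewrite idx_of_pair.
Qed.

Lemma avec_map s T (w : T.-tuple 'I_3) :
  avec R (map_tuple s w) = sact (s^-1)%g (avec R w).
Proof.
rewrite !avec_trans sactE mulmx_suml; apply: eq_bigr => l _.
rewrite -sactE sact_trans invgK.
have ltlT : (l.+1 < T)%N by have := ltn_ord l; lia.
by rewrite !(nth_map ord0) ?size_tuple // ltnW.
Qed.

End Symmetry.

Lemma OmegaP T (w : T.-tuple 'I_3) :
  reflect (forall l, (l.+1 < T)%N -> nth ord0 w l != nth ord0 w l.+1) (w \in Omega T).
Proof.
rewrite inE; apply: (iffP forallP) => [H l ltlT | H l].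
  by have /implyP := H (Ordinal (ltnW ltlT)); rewrite (tnth_nth ord0); apply.
by apply/implyP; rewrite (tnth_nth ord0); apply: H.
Qed.

Lemma mem_Omega_map T (f : 'I_3 -> 'I_3) (w : T.-tuple 'I_3) :
  injective f -> (map_tuple f w \in Omega T) = (w \in Omega T).
Proof.
move=> finj; apply/OmegaP/OmegaP => H l ltlT; move: (H l ltlT);
  by rewrite !(nth_map ord0) ?size_tuple ?(ltnW ltlT) // (inj_eq finj).
Qed.

Lemma sum_Omega_map (V : nmodType) T (s : 'S_3) (F : T.-tuple 'I_3 -> V) :
  \sum_(w in Omega T) F (map_tuple s w) = \sum_(w in Omega T) F w.
Proof.
have map_tupleK t : cancel (@map_tuple T _ _ (t : 'S_3)) (map_tuple (t^-1)%g).
  by move=> w; apply: val_inj; rewrite /= (mapK (permK t)).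
rewrite [RHS](reindex (map_tuple s)); last first.
  exists (map_tuple (s^-1)%g) => w _; first exact: map_tupleK.
  by have := map_tupleK (s^-1)%g w; rewrite invgK.
by apply: eq_bigl => w; rewrite mem_Omega_map //; apply: perm_inj.
Qed.

Section ConvexHull.
Variable R : realFieldType.
Implicit Types (s : 'S_3) (c x : 'rV[R]_6) (S : 'rV[R]_6 -> Prop).

Lemma PT_avec T (w : T.-tuple 'I_3) : w \in Omega T -> @PT R T (avec R w).
Proof.
move=> wO; exists (fun v => (v == w)%:R); split=> [v|]; first by rewrite ler0n.
split; first by rewrite (bigD1 w) //= eqxx big1 ?addr0 // => v /andP[_ /negbTE->].
rewrite (bigD1 w) //= eqxx scale1r big1 ?addr0 // => v /andP[_ /negbTE->].
by rewrite scale0r.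
Qed.

Lemma PT_dotv_const T c (a : R) :
  (forall w, w \in Omega T -> dotv c (avec R w) = a) ->
  forall x, @PT R T x -> dotv c x = a.
Proof.
move=> ca x [lam [_ [sum1 ->]]]; rewrite dotv_sum.
under eq_bigr => w wO do rewrite dotvZ ca //.
by rewrite -big_distrl /= sum1 mul1r.
Qed.

Lemma PT_sact T s x : @PT R T x -> @PT R T (sact s x).
Proof.
case=> lam [lam_ge0 [sum1 ->]]; exists (fun w => lam (map_tuple s w)).
split=> //; split; first by rewrite sum_Omega_map.
have -> : \sum_(w in Omega T) lam (map_tuple s w) *: avec R w =
          \sum_(w in Omega T) lam (map_tuple s w) *: sact s (avec R (map_tuple s w)).
  by apply: eq_bigr => w _; rewrite avec_map sactKV.
rewrite (sum_Omega_map s (fun v => lam v *: sact s (avec R v))) sactE mulmx_suml.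
by apply: eq_bigr => w _; rewrite -scalemxAl -sactE.
Qed.

Lemma has_aff_indep_sact s S S' n :
  (forall x, S x -> S' (sact s x)) -> has_aff_indep S n -> has_aff_indep S' n.
Proof.
move=> SS' [p [Sp free_p]]; exists (fun i => sact s (p i)); split=> [i|].
  exact/SS'/Sp.
have -> : \matrix_(i < n) (sact s (p (lift ord0 i)) - sact s (p ord0)) =
          (\matrix_(i < n) (p (lift ord0 i) - p ord0)) *m perm_mx (perm (@sidx_inj s))^-1.
  by apply/row_matrixP => i; rewrite row_mul !rowK !sactE mulmxBl.
by rewrite /row_free mxrankMfree ?row_free_unit ?unitmx_perm.
Qed.

Lemma is_affdim_sact s S S' d :
  (forall x, S x -> S' (sact s x)) -> (forall x, S' x -> S (sact (s^-1)%g x)) ->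
  is_affdim S d -> is_affdim S' d.
Proof.
move=> SS' S'S; case: d => [n|[|n]] //=.
  case=> indep_n not_indep; split; first exact: has_aff_indep_sact SS' indep_n.
  by move/(has_aff_indep_sact S'S).
by move=> S0 x /S'S /S0.
Qed.

Lemma defines_facet_sact T c s : defines_facet T c -> defines_facet T (sact s c).
Proof.
case=> c_ge0 [d [dimP dimF]]; split=> [w wO|].
  rewrite -(sactKV s (avec R w)) -avec_map dotv_sact.
  by apply: c_ge0; rewrite mem_Omega_map //; apply: perm_inj.
exists d; split.
  by apply: (@is_affdim_sact s) dimP => x; apply: PT_sact.
apply: (@is_affdim_sact s) dimF => x [Px cx0]; split; try exact: PT_sact.
  by rewrite dotv_sact.
by rewrite -(dotv_sact s) sactKV.
Qed.

Lemma dotv1_avec T (w : T.-tuple 'I_3) :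
  w \in Omega T -> dotv (const_mx 1) (avec R w) = (T.-1)%:R.
Proof.
move=> /OmegaP wO; rewrite avec_trans dotv_sum.
transitivity (\sum_(l < T.-1) (1 : R)); last by rewrite sumr_const card_ord.
apply: eq_bigr => l _; rewrite dotv_trans ?mxE // wO //.
by have := ltn_ord l; lia.
Qed.

Lemma has_aff_indep_le S n p (A : 'M[R]_(p, 6)) : row_free A ->
  (forall j x y, S x -> S y -> dotv (row j A) x = dotv (row j A) y) ->
  has_aff_indep S n -> (n + p <= 6)%N.
Proof.
move=> freeA SA [pt [Spt free_pt]].
set M := \matrix_(i < n) (pt (lift ord0 i) - pt ord0) in free_pt.
have MA0 : M *m A^T = 0.
  apply/matrixP => i j; rewrite !mxE.
  transitivity (dotv (row j A) (pt (lift ord0 i) - pt ord0)).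
    by rewrite /dotv; apply: eq_bigr => k _; rewrite !mxE mulrC.
  by rewrite dotvB (SA j (pt (lift ord0 i)) (pt ord0)) ?subrr.
have := mxrankS (introT sub_kermxP MA0).
rewrite mxrank_ker mxrank_tr (eqP freeA) (eqP free_pt).
by have := rank_leq_col A; rewrite (eqP freeA); lia.
Qed.

End ConvexHull.

Lemma row_free_rowsub (F : fieldType) m n p (f : 'I_p -> 'I_m) (A : 'M[F]_(m, n)) :
  injective f -> row_free A -> row_free (rowsub f A).
Proof.
move=> finj /row_freeP[B AB1]; apply/row_freeP; exists (colsub f B).
apply/matrixP => i j; have := congr1 (fun M : 'M_m => M (f i) (f j)) AB1.
by rewrite !mxE (inj_eq finj) => <-; apply: eq_bigr => k _; rewrite !mxE.
Qed.

Definition heavy (a b : 'I_3) : bool :=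
  ((a == ord3 0) && (b == ord3 1)) || ((a == ord3 2) && (b != ord3 2)).

Definition cweight (R : pzRingType) (k : nat) (a b : 'I_3) : R :=
  if heavy a b then (2 * k + 1)%:R else - k%:R.

Lemma cvec_idx (R : pzRingType) k a b : a != b -> cvec R k 0 (idx_of a b) = cweight R k a b.
Proof. by rewrite idx_ofE mxE; case: a b => [[|[|[|//]]] ?] [[|[|[|//]]] ?]. Qed.

(* The light transitions 13, 21, 23 (in the paper's letters) form an acyclic graph
   whose longest path has two edges. *)
Lemma heavy_3steps a b c d :
  a != b -> b != c -> c != d -> [|| heavy a b, heavy b c | heavy c d].
Proof.
by case: a b c d => [[|[|[|//]]] ?] [[|[|[|//]]] ?] [[|[|[|//]]] ?] [[|[|[|//]]] ?].
Qed.

Section Nonnegativity.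
Variables (R : realFieldType) (k : nat).

Lemma cweight_3steps a b c d : a != b -> b != c -> c != d ->
  1 <= cweight R k a b + cweight R k b c + cweight R k c d.
Proof.
move=> ab bc cd; have := heavy_3steps ab bc cd; rewrite /cweight natrD natrM.
have k_ge0 : (0 : R) <= k%:R by rewrite ler0n.
by case: (heavy a b); case: (heavy b c); case: (heavy c d) => //= _; lra.
Qed.

Lemma cweight_walk_ge0 (u : nat -> 'I_3) :
  (forall l, (l < 3 * k + 1)%N -> u l != u l.+1) ->
  0 <= \sum_(l < 3 * k + 1) cweight R k (u l) (u l.+1).
Proof.
move=> u_neq; set h := fun l => cweight R k (u l) (u l.+1).
have blocks j : (j <= k)%N -> j%:R <= \sum_(0 <= l < 3 * j) h l.
  elim: j => [|j IH] ltjk; first by rewrite big_geq.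
  have -> : (3 * j.+1 = (3 * j).+2.+1)%N by lia.
  rewrite !big_nat_recr //=; have := IH (ltnW ltjk).
  have := @cweight_3steps (u (3 * j)) (u (3 * j).+1) (u (3 * j).+2) (u (3 * j).+3).
  rewrite !u_neq; try lia; move=> /(_ isT isT isT); rewrite -[j.+1]addn1 natrD /h; lra.
have last_ge : - k%:R <= h (3 * k)%N.
  by rewrite /h /cweight; case: heavy; rewrite ?natrD ?natrM; have := ler0n R k; lra.
rewrite -(big_mkord xpredT h) addn1 big_nat_recr //=.
by have := blocks k (leqnn k); lra.
Qed.

Lemma cvec_avec_ge0 (w : (3 * k + 2).-tuple 'I_3) :
  w \in Omega (3 * k + 2) -> 0 <= dotv (cvec R k) (avec R w).
Proof.
move=> /OmegaP wO; rewrite avec_trans dotv_sum.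
have -> : (3 * k + 2).-1 = (3 * k + 1)%N by lia.
have w_neq l : (l < 3 * k + 1)%N -> nth ord0 w l != nth ord0 w l.+1.
  by move=> ltl; apply: wO; lia.
rewrite (eq_bigr (fun l : 'I_(3 * k + 1) => cweight R k (nth ord0 w l) (nth ord0 w l.+1))).
  exact: cweight_walk_ge0.
by move=> l _; rewrite dotv_trans ?cvec_idx ?w_neq.
Qed.

End Nonnegativity.

Fixpoint cycle_word (l : nat) : 'I_3 :=
  match l with 0 => ord3 1 | 1 => ord3 0 | 2 => ord3 2 | l'.+3 => cycle_word l' end.

Lemma cycle_word_neq l : cycle_word l != cycle_word l.+1.
Proof. by elim/ltn_ind: l => -[|[|[|l]]] IH //; apply: (IH l); lia. Qed.

Lemma cycle_word_mul3 m : cycle_word (3 * m) = ord3 1.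
Proof. by elim: m => // m; have -> : (3 * m.+1 = (3 * m).+3)%N by lia. Qed.

Lemma sum_period3 (V : nmodType) (G : nat -> V) m : (forall l, G l.+3 = G l) ->
  \sum_(0 <= l < 3 * m) G l = (G 0%N + G 1%N + G 2%N) *+ m.
Proof.
move=> G3; elim: m => [|m IH]; first by rewrite big_geq.
have -> : (3 * m.+1 = (3 * m).+3)%N by lia.
rewrite !big_nat_recl //; under eq_big_nat => l _ do rewrite G3.
by rewrite IH mulrS !addrA.
Qed.

Definition cycle_sum (V : nmodType) (F : 'I_3 -> 'I_3 -> V) : V :=
  F (ord3 1) (ord3 0) + F (ord3 0) (ord3 2) + F (ord3 2) (ord3 1).

Definition head_word (h : seq 'I_3) (l : nat) : 'I_3 :=
  if (l < 4)%N then nth ord0 h l else cycle_word l.+1.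

Definition tail_word m (t : seq 'I_3) (l : nat) : 'I_3 :=
  if (l <= 3 * m)%N then cycle_word l else nth ord0 t (l - (3 * m).+1).

Lemma tail_word_cycle m t l : (l <= 3 * m)%N -> tail_word m t l = cycle_word l.
Proof. by rewrite /tail_word => ->. Qed.

Lemma tail_word_nth i m t : tail_word m t (i + (3 * m).+1) = nth ord0 t i.
Proof. by rewrite /tail_word ifF; [congr nth; lia | lia]. Qed.

Lemma head_word_neq h l :
  nth ord0 h 0 != nth ord0 h 1 -> nth ord0 h 1 != nth ord0 h 2 ->
  nth ord0 h 2 != nth ord0 h 3 -> nth ord0 h 3 != ord3 2 ->
  head_word h l != head_word h l.+1.
Proof. by move=> h01 h12 h23 h3; case: l => [|[|[|[|l]]]] //; apply: cycle_word_neq. Qed.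

Lemma tail_word_neq m t l :
  nth ord0 t 0 != ord3 1 -> nth ord0 t 0 != nth ord0 t 1 ->
  nth ord0 t 1 != nth ord0 t 2 -> nth ord0 t 2 != nth ord0 t 3 ->
  (l < (3 * m).+4)%N -> tail_word m t l != tail_word m t l.+1.
Proof.
move=> t0 t01 t12 t23 ltl; have [lt3m | ge3m] := ltnP l (3 * m).
  by rewrite !tail_word_cycle ?cycle_word_neq // ltnW.
have [-> | ne3m] := eqVneq l (3 * m).
  by rewrite tail_word_cycle // cycle_word_mul3 (tail_word_nth 0) eq_sym.
have [i def_l] : exists i, l = (i + (3 * m).+1)%N by exists (l - (3 * m).+1)%N; lia.
rewrite def_l (tail_word_nth i) (tail_word_nth i.+1).
by case: i def_l => [|[|[|i]]] //; lia.
Qed.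

Section WordSums.
Variables (V : nmodType) (F : 'I_3 -> 'I_3 -> V) (m : nat).

Lemma sum_head_word h :
  \sum_(0 <= l < (3 * m).+4) F (head_word h l) (head_word h l.+1) =
  F (nth ord0 h 0) (nth ord0 h 1) + F (nth ord0 h 1) (nth ord0 h 2) +
  F (nth ord0 h 2) (nth ord0 h 3) + F (nth ord0 h 3) (ord3 2) + cycle_sum F *+ m.
Proof.
rewrite !big_nat_recl //.
rewrite (@sum_period3 _ (fun l => F (cycle_word l.+4.+1) (cycle_word l.+4.+2))) //.
by rewrite /cycle_sum /= !addrA [_ + F (ord3 2) _]addrC !addrA.
Qed.

Lemma sum_tail_word t :
  \sum_(0 <= l < (3 * m).+4) F (tail_word m t l) (tail_word m t l.+1) =
  cycle_sum F *+ m + F (ord3 1) (nth ord0 t 0) + F (nth ord0 t 0) (nth ord0 t 1) +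
  F (nth ord0 t 1) (nth ord0 t 2) + F (nth ord0 t 2) (nth ord0 t 3).
Proof.
rewrite !big_nat_recr //=.
rewrite (@eq_big_nat _ _ _ 0 (3 * m) _ (fun l => F (cycle_word l) (cycle_word l.+1))); last first.
  by move=> l /andP[_ ltl]; rewrite !tail_word_cycle //; lia.
rewrite (@sum_period3 _ (fun l => F (cycle_word l) (cycle_word l.+1))) //.
rewrite tail_word_cycle // cycle_word_mul3.
by rewrite (tail_word_nth 0) (tail_word_nth 1) (tail_word_nth 2) (tail_word_nth 3).
Qed.

End WordSums.

Definition word_tuple T (f : nat -> 'I_3) : T.-tuple 'I_3 := [tuple of mkseq f T].

Lemma nth_word_tuple T f l : (l < T)%N -> nth ord0 (word_tuple T f) l = f l.
Proof. exact: nth_mkseq. Qed.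

Lemma word_tuple_Omega T f :
  (forall l, (l.+1 < T)%N -> f l != f l.+1) -> word_tuple T f \in Omega T.
Proof. by move=> f_neq; apply/OmegaP => l ltlT; rewrite !nth_word_tuple ?f_neq // ltnW. Qed.

Lemma avec_word_tuple (R : comPzRingType) T f :
  avec R (word_tuple T f) = \sum_(0 <= l < T.-1) tvec R (f l) (f l.+1).
Proof.
rewrite avec_trans big_mkord; apply: eq_bigr => l _.
by have ltl := ltn_ord l; rewrite !nth_word_tuple //; lia.
Qed.

Definition sample_word m (i : nat) : nat -> 'I_3 :=
  match i with
  | 0 => tail_word m [:: ord3 0; ord3 2; ord3 1; ord3 0]
  | 1 => tail_word m [:: ord3 0; ord3 2; ord3 1; ord3 2]
  | 2 => head_word [:: ord3 0; ord3 2; ord3 1; ord3 0]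
  | 3 => head_word [:: ord3 1; ord3 0; ord3 2; ord3 0]
  | 4 => head_word [:: ord3 1; ord3 0; ord3 1; ord3 0]
  | _ => tail_word m [:: ord3 0; ord3 1; ord3 0; ord3 1]
  end.

Lemma sample_word_Omega m i : word_tuple _ (sample_word m i) \in Omega (3 * m).+4.+1.
Proof.
apply: word_tuple_Omega => l ltl.
by case: i => [|[|[|[|[|i]]]]]; first [apply: tail_word_neq | apply: head_word_neq].
Qed.

Definition sample_vec (R : comPzRingType) m i : 'rV[R]_6 :=
  avec R (word_tuple (3 * m).+4.+1 (sample_word m i)).

Lemma sample_vec_face (R : comPzRingType) m i : (i < 5)%N ->
  dotv (cvec R m.+1) (sample_vec R m i) = 0.
Proof.
move=> lti5; rewrite /sample_vec avec_word_tuple dotv_sum /=.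
set F := fun a b => dotv (cvec R m.+1) (tvec R a b).
case: i lti5 => [|[|[|[|[|//]]]]] _ /=;
  rewrite ?(sum_tail_word F) ?(sum_head_word F) /cycle_sum /F !dotv_trans //;
  rewrite !cvec_idx //= /cweight /=; ring.
Qed.

Definition sample_diffs (R : pzRingType) : 'M[R]_(5, 6) :=
  \matrix_(i, j) nth 0 (nth [::]
    [:: [:: 0; 0; -1; 1; 0; 0]; [:: 0; 1; -1; 0; 0; 0]; [:: 0; 1; -1; 0; 1; -1];
        [:: 1; 0; 0; 0; 0; -1]; [:: 2; -1; 0; 0; 0; -1]] i) j.

Lemma sample_vec_diffs (R : comPzRingType) m :
  \matrix_(i < 5) (sample_vec R m i.+1 - sample_vec R m 0) = sample_diffs R.
Proof.
apply/matrixP => i j; rewrite [LHS]mxE /sample_vec !avec_word_tuple !mxE !summxE /=.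
case: j => [[|[|[|[|[|[|//]]]]]] ?]; case: i => [[|[|[|[|[|//]]]]] ?];
  rewrite /= ?(sum_tail_word (fun a b => tvec R a b 0 _));
  rewrite ?(sum_head_word (fun a b => tvec R a b 0 _)) /cycle_sum !mxE pair_ofE /=; ring.
Qed.

Lemma row_free_sample_diffs (F : fieldType) : row_free (sample_diffs F).
Proof.
apply/row_freeP; exists (\matrix_(i < 6, j < 5) nth 0 (nth [::]
    [:: [:: 0; 0; 0; 1; 0]; [:: 0; 0; 0; 2; -1]; [:: 0; -1; 0; 2; -1];
        [:: 1; -1; 0; 2; -1]; [:: 0; -1; 1; 0; 0]; [:: 0; 0; 0; 0; 0]] i) j).
apply/matrixP => i j; rewrite !mxE !big_ord_recr big_ord0 /= !mxE.
by case: i => [[|[|[|[|[|//]]]]] ?]; case: j => [[|[|[|[|[|//]]]]] ?] /=; ring.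
Qed.

Section Facet.
Variable R : realFieldType.

Lemma row_free_const1 : row_free (const_mx 1 : 'rV[R]_6).
Proof.
rewrite /row_free rank_rV; suff -> : (const_mx 1 : 'rV[R]_6) != 0 by [].
by apply/eqP => /rowP/(_ ord0)/eqP; rewrite !mxE oner_eq0.
Qed.

Lemma row_free_const1_cvec k :
  row_free (\matrix_(j < 2) (if j == ord0 then const_mx 1 else cvec R k)).
Proof.
apply: inj_row_free => v vA0.
have entry q : v 0 ord0 + v 0 ord_max * cvec R k 0 q = 0.
  have -> : ord0 = widen_ord (leqnSn 1) ord_max by apply: val_inj.
  have := congr1 (fun M : 'rV[R]_6 => M 0 q) vA0.
  by rewrite !mxE !big_ord_recr big_ord0 /= !mxE mulr1 add0r.
have := entry (ord6 0); have := entry (ord6 1); rewrite !mxE /= => e1 e0.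
have v1_0 : v 0 ord_max = 0.
  have : v 0 ord_max * (3 * k + 1)%:R = 0.
    by rewrite -[RHS](subrr 0) -{1}e0 -e1 natrD natrM; ring.
  by move/eqP; rewrite mulf_eq0 pnatr_eq0 addn1 orbF => /eqP.
have v0_0 : v 0 ord0 = 0 by rewrite -e0 v1_0 mul0r addr0.
apply/rowP => j; rewrite mxE; case: j => [[|[|//]] ltj2]; [rewrite -v0_0 | rewrite -v1_0];
  by congr (v _ _); apply: val_inj.
Qed.

Lemma cvec_defines_facet k : (1 <= k)%N -> defines_facet (3 * k + 2) (cvec R k).
Proof.
case: k => [//|m] _; split=> [w|]; first exact: cvec_avec_ge0.
have -> : (3 * m.+1 + 2 = (3 * m).+4.+1)%N by lia.
set T := (3 * m).+4.+1.
have sum_const x y : @PT R T x -> @PT R T y -> dotv (const_mx 1) x = dotv (const_mx 1) y.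
  by move=> Px Py; rewrite !(PT_dotv_const (@dotv1_avec R T)).
have sample_PT i : @PT R T (sample_vec R m i) by apply/PT_avec/sample_word_Omega.
exists 5%:Z; split; split.
- exists (fun i : 'I_6 => sample_vec R m i); split=> //.
  by have := row_free_sample_diffs R; rewrite -(sample_vec_diffs R m).
- move/(has_aff_indep_le row_free_const1) => bound; suff : (6 + 1 <= 6)%N by [].
  by apply: bound => j x y; rewrite row_const; apply: sum_const.
- exists (fun i : 'I_5 => sample_vec R m i); split=> [i|].
    by split; [exact: sample_PT | exact: sample_vec_face].
  have widen_inj : injective (widen_ord (leqnSn 4)) by move=> i j /(congr1 val) /= /val_inj.
  have := row_free_rowsub widen_inj (row_free_sample_diffs R).
  rewrite -(sample_vec_diffs R m); congr (is_true (row_free _)).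
  by apply/matrixP => i j; rewrite !mxE.
- move/(has_aff_indep_le (row_free_const1_cvec m.+1)) => bound; suff : (5 + 2 <= 6)%N by [].
  apply: bound => j x y [Px cx0] [Py cy0].
  by rewrite rowK; case: eqP => _; [apply: sum_const | rewrite cx0 cy0].
Qed.

End Facet.

Theorem proposition9 (R : realFieldType) (k : nat) (s : 'S_3) :
  (1 <= k)%N -> @defines_facet R (3 * k + 2) (sact s (@cvec R k)).
Proof. by move=> k_ge1; apply/defines_facet_sact/cvec_defines_facet. Qed.
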